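(* Let $T$ be an $n$-dimensional simplex in $\mathbb{R}^n$, and let $Q$ be a polytope in $\mathbb{R}^n$ having at most $n$ vertices. Suppose that, for every unit vector $u$, there exists $v \in u^\perp$ such that $Q_u + v \subseteq T_u$. Then there exists $v_0 \in \mathbb{R}^n$ such that $Q + v_0 \subseteq T$.
   Context: For a unit vector $u$ and a set $S\subseteq\mathbb{R}^n$, $S_u$ denotes the orthogonal projection of $S$ onto the hyperplane $u^\perp$. *)

From mathcomp Require Import all_boot all_order all_algebra.
From mathcomp Require Import reals.
Set Implicit Arguments. Unset Strict Implicit. Unset Printing Implicit Defensive.
Import Order.TTheory GRing.Theory Num.Theory.
Local Open Scope ring_scope.

Definition dotv (R : realType) (n : nat) (x y : 'rV[R]_n) : R :=
  \sum_(i < n) x 0 i * y 0 i.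

Definition conv (R : realType) (n k : nat) (p : 'I_k -> 'rV[R]_n)
  (x : 'rV[R]_n) : Prop :=
  exists w : 'I_k -> R, (forall i, 0 <= w i) /\ \sum_(i < k) w i = 1 /\
    x = \sum_(i < k) w i *: p i.

Definition affinely_independent (R : realType) (n k : nat)
  (p : 'I_k -> 'rV[R]_n) : Prop :=
  forall c : 'I_k -> R, \sum_(i < k) c i = 0 ->
    \sum_(i < k) c i *: p i = 0 -> forall i, c i = 0.

Definition is_simplex (R : realType) (n : nat) (S : 'rV[R]_n -> Prop) : Prop :=
  exists p : 'I_n.+1 -> 'rV[R]_n, affinely_independent p /\
    forall x, S x <-> conv p x.

(* S is a polytope with at most n vertices: the convex hull of at most n
   points (the vertices of conv P form a subset of P, and a polytope is the
   convex hull of its vertices) *)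
Definition polytope_at_most (R : realType) (n m : nat) (S : 'rV[R]_n -> Prop)
  : Prop :=
  exists k (p : 'I_k -> 'rV[R]_n), (k <= m)%N /\ forall x, S x <-> conv p x.

(* orthogonal projection onto u^perp, for a unit vector u *)
Definition projv (R : realType) (n : nat) (u x : 'rV[R]_n) : 'rV[R]_n :=
  x - dotv x u *: u.

Definition proj_set (R : realType) (n : nat) (S : 'rV[R]_n -> Prop)
  (u : 'rV[R]_n) (y : 'rV[R]_n) : Prop :=
  exists x, S x /\ y = projv u x.

(* Write T = conv p and the vertices of Q in barycentric coordinates,
   q_i = sum_l L_il p_l.  Translating by sum_l t_l p_l with sum_l t_l = 0 moves
   Q into T as soon as L_il + t_l >= 0 for all i, l, and such t exists once
   sum_l min_i L_il >= 0.  As Q has fewer vertices than T, two columns j, j'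
   attain their minima at the same vertex.  Projecting along the edge
   p_j - p_j' merges the coordinates j and j', so the hypothesis for that single
   direction gives e with sum_l e_l = 0, L_il + e_l >= 0 for l <> j, j', and
   L_ij + L_ij' + e_j + e_j' >= 0; summing at the minimizers gives
   sum_l min_i L_il >= 0. *)

From Pilot Require Import Defs.
From mathcomp Require Import all_boot all_order all_algebra.
From mathcomp Require Import reals ring lra.
Import Order.TTheory GRing.Theory Num.Theory.
Set Implicit Arguments. Unset Strict Implicit. Unset Printing Implicit Defensive.
Local Open Scope ring_scope.

Section Indicator.
Variables (R : realType) (V : lmodType R) (k : nat).

Lemma sum_indicator (j : 'I_k) : \sum_(l < k) ((l == j)%:R : R) = 1.
Proof. by rewrite (bigD1 j) //= eqxx big1 ?addr0 // => l /negbTE ->. Qed.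

Lemma sum_indicator_scale (j : 'I_k) (f : 'I_k -> V) :
  \sum_(l < k) ((l == j)%:R : R) *: f l = f j.
Proof.
rewrite (bigD1 j) //= eqxx scale1r big1 ?addr0 // => l /negbTE ->.
by rewrite scale0r.
Qed.

End Indicator.

Section AffineCoordinates.
Variables (R : realType) (n k : nat) (p : 'I_k -> 'rV[R]_n).
Hypothesis p_aff : affinely_independent p.

Lemma affine_coords_uniq (w1 w2 : 'I_k -> R) :
  \sum_i w1 i = \sum_i w2 i -> \sum_i w1 i *: p i = \sum_i w2 i *: p i ->
  w1 =1 w2.
Proof.
move=> sum_eq comb_eq i; apply/eqP; rewrite -subr_eq0; apply/eqP.
apply: (@p_aff (fun i => w1 i - w2 i)); first by rewrite sumrB sum_eq subrr.
by under eq_bigr do rewrite scalerBl; rewrite sumrB comb_eq subrr.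
Qed.

Lemma affinely_independent_inj : injective p.
Proof.
move=> j j' pj_eq.
have := @affine_coords_uniq (fun l => (l == j)%:R) (fun l => (l == j')%:R).
rewrite !sum_indicator !sum_indicator_scale => /(_ erefl pj_eq j).
by rewrite eqxx; case: eqP => // _ /eqP; rewrite oner_eq0.
Qed.

Lemma conv_coords_ge0 (w : 'I_k -> R) x :
  conv p x -> \sum_i w i = 1 -> \sum_i w i *: p i = x -> forall i, 0 <= w i.
Proof.
move=> [w' [w'_ge0 [w'_sum ->]]] w_sum w_comb i.
by rewrite (@affine_coords_uniq w w') ?w_sum.
Qed.

(* Displacing [x] along the edge [p j - p j'] only moves weight between the
   coordinates [j] and [j'], leaving their sum unchanged. *)
Lemma coords_ge0_along_edge (j j' : 'I_k) (w e : 'I_k -> R) x v r :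
  j != j' -> \sum_l w l = 1 -> \sum_l w l *: p l = x ->
  \sum_l e l = 0 -> \sum_l e l *: p l = v ->
  conv p (x + v + r *: (p j - p j')) ->
  (forall l, l != j -> l != j' -> 0 <= w l + e l) /\
  0 <= w j + w j' + e j + e j'.
Proof.
move=> njj' w_sum w_comb e_sum e_comb hconv.
pose W l := w l + e l + r * ((l == j)%:R - (l == j')%:R).
have W_ge0 : forall l, 0 <= W l.
  apply: (@conv_coords_ge0 W _ hconv).
    rewrite !big_split /= w_sum e_sum -mulr_sumr sumrB !sum_indicator.
    by rewrite subrr mulr0 !addr0.
  under eq_bigr do rewrite !scalerDl -scalerA scalerBl.
  by rewrite !big_split /= -scaler_sumr sumrB !sum_indicator_scale w_comb e_comb.
split=> [l ljn lj'n|].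
  by have := W_ge0 l; rewrite /W (negbTE ljn) (negbTE lj'n) subrr mulr0 addr0.
have := W_ge0 j; have := W_ge0 j'.
by rewrite /W !eqxx (negbTE njj') eq_sym (negbTE njj'); lra.
Qed.

End AffineCoordinates.

Lemma affine_coords_exist (R : realType) (n : nat) (p : 'I_n.+1 -> 'rV[R]_n) :
  affinely_independent p -> forall (a : R) (x : 'rV[R]_n),
  exists w : 'I_n.+1 -> R, \sum_i w i = a /\ \sum_i w i *: p i = x.
Proof.
move=> p_aff a x; pose P := \matrix_(i < n.+1) p i.
have mulP (w : 'rV[R]_n.+1) : w *m P = \sum_i w 0 i *: p i.
  by rewrite mulmx_sum_row; apply: eq_bigr => i _; rewrite rowK.
have mul1 (w : 'rV[R]_n.+1) : (w *m (const_mx 1 : 'cV_n.+1)) 0 0 = \sum_i w 0 i.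
  by rewrite mxE; apply: eq_bigr => i _; rewrite mxE mulr1.
(* The rows of [M] are the points [p i] in homogeneous coordinates. *)
pose M : 'M[R]_(n.+1, 1 + n) := row_mx (const_mx 1) P.
have M_unit : M \in unitmx.
  rewrite -row_free_unit; apply: inj_row_free => w wM0.
  have /eqP : row_mx (w *m const_mx 1) (w *m P) = 0 :> 'rV_(1 + n).
    by rewrite -mul_mx_row.
  rewrite -[X in _ == X]row_mx0 => /eqP /eq_row_mx [w1 wP].
  apply/rowP => i; rewrite mxE; apply: (p_aff (fun i => w 0 i)).
    by rewrite -mul1 w1 mxE.
  by rewrite -mulP wP.
pose w := row_mx a%:M x *m invmx M.
have /eq_row_mx [w1 wP] : row_mx (w *m const_mx 1) (w *m P) = row_mx a%:M x.
  by rewrite -mul_mx_row mulmxKV.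
exists (fun i => w 0 i); split; last by rewrite -mulP.
by rewrite -mul1 w1 mxE mulr1n.
Qed.

Lemma conv_vertex (R : realType) (n k : nat) (p : 'I_k -> 'rV[R]_n) i :
  conv p (p i).
Proof.
exists (fun l => (l == i)%:R); split; first by move=> l; rewrite ler0n.
by rewrite sum_indicator sum_indicator_scale.
Qed.

Lemma conv_translate (R : realType) (n k N : nat) (q : 'I_k -> 'rV[R]_n)
    (p : 'I_N -> 'rV[R]_n) (L : 'I_k -> 'I_N -> R) (t : 'I_N -> R) :
  (forall i, \sum_l L i l = 1 /\ \sum_l L i l *: p l = q i) ->
  \sum_l t l = 0 -> (forall i l, 0 <= L i l + t l) ->
  forall x, conv q x -> conv p (x + \sum_l t l *: p l).
Proof.
move=> L_coords t_sum Lt_ge0 x [mu [mu_ge0 [mu_sum ->]]].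
exists (fun l => \sum_i mu i * (L i l + t l)); split.
  by move=> l; apply: sumr_ge0 => i _; apply: mulr_ge0.
split.
  rewrite exchange_big /=.
  by under eq_bigr do rewrite -mulr_sumr big_split /= t_sum addr0 (proj1 (L_coords _)) mulr1.
have shift_comb i : \sum_l (L i l + t l) *: p l = q i + \sum_l t l *: p l.
  by under eq_bigr do rewrite scalerDl; rewrite big_split /= (proj2 (L_coords i)).
symmetry; under eq_bigr do rewrite scaler_suml.
rewrite exchange_big /=.
under eq_bigr do under eq_bigr do rewrite -scalerA.
under eq_bigr do rewrite -scaler_sumr shift_comb.
by under eq_bigr do rewrite scalerDr; rewrite big_split /= -scaler_suml mu_sum scale1r.
Qed.

Section Projection.
Variables (R : realType) (n : nat).
Implicit Types (x d u v : 'rV[R]_n).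

Lemma dotvZZ (c : R) d : dotv (c *: d) (c *: d) = c ^+ 2 * dotv d d.
Proof. by rewrite /dotv mulr_sumr; apply: eq_bigr => i _; rewrite !mxE; ring. Qed.

Lemma dotv_gt0 d : d != 0 -> 0 < dotv d d.
Proof.
have sq_ge0 i : 0 <= d 0 i * d 0 i by rewrite -expr2 sqr_ge0.
move=> d_neq0; rewrite lt_def sumr_ge0 ?andbT //.
apply: contra d_neq0 => /eqP/(psumr_eq0P (fun i _ => sq_ge0 i)) d0.
by apply/eqP/rowP => i; have /eqP := d0 i isT; rewrite -expr2 sqrf_eq0 mxE => /eqP.
Qed.

Lemma exists_unit_multiple d : d != 0 -> exists c : R, dotv (c *: d) (c *: d) = 1.
Proof.
move=> /dotv_gt0 dd_gt0; exists (Num.sqrt (dotv d d))^-1.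
by rewrite dotvZZ exprVn sqr_sqrtr ?ltW // mulVf // gt_eqF.
Qed.

Lemma proj_set_line (S : 'rV[R]_n -> Prop) u x v :
  proj_set S u (Defs.projv u x + v) -> exists s : R, S (x + v + s *: u).
Proof.
move=> [y [Sy y_proj]]; exists (dotv y u - dotv x u).
suff -> : x + v + (dotv y u - dotv x u) *: u = y by [].
move/(congr1 (fun z => z + dotv y u *: u)): y_proj.
rewrite /Defs.projv subrK => y_eq; apply: etrans y_eq.
by rewrite scalerBl addrA addrAC [x - _ + v]addrAC.
Qed.

End Projection.

Section ZeroSumShift.
Variable R : realType.

Lemma zero_sum_shift (N : nat) (m : 'I_N.+1 -> R) :
  0 <= \sum_l m l ->
  exists t : 'I_N.+1 -> R, \sum_l t l = 0 /\ forall l, 0 <= m l + t l.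
Proof.
move=> m_ge0; pose a := (\sum_l m l) / N.+1%:R.
exists (fun l => a - m l); split.
  by rewrite sumrB sumr_const card_ord -mulr_natr /a mulfVK ?subrr // pnatr_eq0.
by move=> l; rewrite addrC subrK divr_ge0.
Qed.

(* Pigeonhole on the column-wise argmin map. *)
Lemma exists_common_minimizer (k N : nat) (L : 'I_k.+1 -> 'I_N -> R) :
  (k.+1 < N)%N -> exists i0 j j',
    [/\ j != j', forall i, L i0 j <= L i j & forall i, L i0 j' <= L i j'].
Proof.
move=> kN; pose ii l := [arg min_(i < ord0) L i l]%O.
have ii_min l i : L (ii l) l <= L i l by rewrite /ii; case: arg_minP => // i1 _; apply.
have : ~~ injectiveb ii.
  by apply/injectiveP => /leq_card; rewrite !card_ord leqNgt kN.
case/injectivePn => j [j' njj' ii_eq].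
by exists (ii j), j, j'; split=> // i; rewrite ?ii_eq.
Qed.

Lemma zero_sum_shift_of_pair (k N : nat) (L : 'I_k -> 'I_N.+1 -> R)
    (e : 'I_N.+1 -> R) i0 j j' :
  j != j' -> \sum_l e l = 0 ->
  (forall i l, l != j -> l != j' -> 0 <= L i l + e l) ->
  (forall i, 0 <= L i j + L i j' + e j + e j') ->
  (forall i, L i0 j <= L i j) -> (forall i, L i0 j' <= L i j') ->
  exists t : 'I_N.+1 -> R, \sum_l t l = 0 /\ forall i l, 0 <= L i l + t l.
Proof.
move=> njj' e_sum e_ge0 pair_ge0 min_j min_j'.
pose m l := L [arg min_(i < i0) L i l]%O l.
have m_min l i : m l <= L i l by rewrite /m; case: arg_minP => // i1 _; apply.
have [|t [t_sum t_ge0]] := @zero_sum_shift N m; last first.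
  by exists t; split=> // i l; have := t_ge0 l; have := m_min l i; lra.
have -> : \sum_l m l = \sum_l (m l + e l) by rewrite big_split /= e_sum addr0.
rewrite (bigD1 j) //= (bigD1 j') 1?eq_sym //= addrA.
apply: addr_ge0; last by apply: sumr_ge0 => l /andP [lj'n ljn]; apply: e_ge0.
have := pair_ge0 i0; have := min_j [arg min_(i < i0) L i j]%O.
have := min_j' [arg min_(i < i0) L i j']%O; rewrite /m; lra.
Qed.

End ZeroSumShift.

Theorem lemma2p4 (R : realType) (n : nat) (T Q : 'rV[R]_n -> Prop) :
  is_simplex T -> polytope_at_most n Q ->
  (forall u : 'rV[R]_n, dotv u u = 1 ->
     exists v : 'rV[R]_n, dotv v u = 0 /\
       (forall y, proj_set Q u y -> proj_set T u (y + v))) ->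
  exists v0 : 'rV[R]_n, forall x, Q x -> T (x + v0).
Proof.
move=> [p [p_aff T_conv]] [k [q [kn Q_conv]]] shadow.
case: k q kn Q_conv => [|k] q kn Q_conv.
  exists 0 => x /Q_conv [w [_ [+ _]]].
  by rewrite big_ord0 => /eqP; rewrite eq_sym oner_eq0.
have /fin_all_exists [L L_coords] := fun i => affine_coords_exist p_aff 1 (q i).
have [i0 [j [j' [njj' min_j min_j']]]] := exists_common_minimizer L kn.
have d_neq0 : p j - p j' != 0.
  by rewrite subr_eq0; apply: contra njj' => /eqP/affinely_independent_inj ->.
have [c u_unit] := exists_unit_multiple d_neq0.
have [v [_ v_shadow]] := shadow _ u_unit.
have [e [e_sum e_comb]] := affine_coords_exist p_aff 0 v.
have edge_ge0 i : (forall l, l != j -> l != j' -> 0 <= L i l + e l) /\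
                  0 <= L i j + L i j' + e j + e j'.
  have [s] : exists s, T (q i + v + s *: (c *: (p j - p j'))).
    by apply/proj_set_line/v_shadow; exists (q i); split=> //; apply/Q_conv/conv_vertex.
  rewrite scalerA => /T_conv hconv; have [L_sum L_comb] := L_coords i.
  exact: coords_ge0_along_edge njj' L_sum L_comb e_sum e_comb hconv.
have [t [t_sum t_ge0]] := zero_sum_shift_of_pair njj' e_sum
  (fun i => (edge_ge0 i).1) (fun i => (edge_ge0 i).2) min_j min_j'.
exists (\sum_l t l *: p l) => x /Q_conv x_conv; apply/T_conv.
by move: x_conv; apply: (conv_translate L_coords t_sum t_ge0).
Qed.
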